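(* There is an isomorphism of functors $Mag\cong As\circ MagFine$ from vector spaces to vector spaces; that is, for every vector space $V$ over a field $\mathbb K$ there is an isomorphism $Mag(V)\cong T(MagFine(V))$, natural in $V$, where $T$ denotes the tensor algebra functor.
   Context: $Mag(V)=\bigoplus_{n\ge0}\mathbb K[Y_{n-1}]\otimes V^{\otimes n}$ is the free unital magmatic algebra on $V$, $Y_{n-1}$ being the set of planar binary rooted trees with $n$ leaves. $MagFine(V)=\bigoplus_{n\ge1}MagFine_n\otimes V^{\otimes n}$ is the free $MagFine$-algebra on $V$, where a $MagFine$-algebra is a vector space with multilinear operations $m^n_i$ of arity $n$ for $n\ge3$, $1\le i\le n-2$, satisfying no relations, and $MagFine_n$ is the space of $n$-ary operations of the corresponding free nonsymmetric operad. $T(W)=\bigoplus_{n\ge0}W^{\otimes n}$. *)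

From HB Require Import structures.
From mathcomp Require Import all_boot all_order all_algebra.
Set Implicit Arguments. Unset Strict Implicit. Unset Printing Implicit Defensive.
Import GRing.Theory.
Local Open Scope ring_scope.

Section Defs.
Variable K : fieldType.

Definition is_linear (U W : lmodType K) (f : U -> W) : Prop :=
  forall (a : K) (x y : U), f (a *: x + y) = a *: f x + f y.

Record magAlg := MagAlg {
  mag_car :> lmodType K;
  mag_mul : mag_car -> mag_car -> mag_car;
  mag_one : mag_car;
  mag_mulDl : forall (a : K) (x y z : mag_car),
      mag_mul (a *: x + y) z = a *: mag_mul x z + mag_mul y z;
  mag_mulDr : forall (a : K) (x y z : mag_car),
      mag_mul z (a *: x + y) = a *: mag_mul z x + mag_mul z y;
  mag_mul1l : forall x, mag_mul mag_one x = x;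
  mag_mul1r : forall x, mag_mul x mag_one = x
}.

Definition mag_hom (A B : magAlg) (g : A -> B) : Prop :=
  [/\ is_linear g,
      forall x y, g (mag_mul x y) = mag_mul (g x) (g y)
    & g (mag_one A) = mag_one B].

Definition is_free_mag (V : lmodType K) (A : magAlg) (iota : V -> A) : Prop :=
  is_linear iota /\
  forall (B : magAlg) (f : V -> B), is_linear f ->
    (exists g : A -> B, mag_hom g /\ forall v, g (iota v) = f v) /\
    (forall g g' : A -> B, mag_hom g -> mag_hom g' ->
       (forall v, g (iota v) = g' (iota v)) -> forall x, g x = g' x).

Definition multilinear (A : lmodType K) (n : nat) (op : ('I_n -> A) -> A)
  : Prop :=
  forall (j : 'I_n) (x : 'I_n -> A) (a : K) (u w : A),
    op (fun k => if k == j then a *: u + w else x k)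
    = a *: op (fun k => if k == j then u else x k)
      + op (fun k => if k == j then w else x k).

(* MagFine-algebra: multilinear operations m^N_i for N >= 3, 1 <= i <= N-2,
   no relations.  We encode N = n+3 and i = j+1 with j : 'I_(n+1). *)
Record magFineAlg := MagFineAlg {
  mf_car :> lmodType K;
  mf_op : forall (n : nat) (j : 'I_n.+1), ('I_n.+3 -> mf_car) -> mf_car;
  mf_op_multilinear : forall (n : nat) (j : 'I_n.+1), multilinear (@mf_op n j)
}.

Definition mf_hom (A B : magFineAlg) (g : A -> B) : Prop :=
  is_linear g /\
  forall (n : nat) (j : 'I_n.+1) (x : 'I_n.+3 -> A),
    g (@mf_op A n j x) = @mf_op B n j (fun k => g (x k)).

Definition is_free_magfine (V : lmodType K) (A : magFineAlg) (iota : V -> A)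
  : Prop :=
  is_linear iota /\
  forall (B : magFineAlg) (f : V -> B), is_linear f ->
    (exists g : A -> B, mf_hom g /\ forall v, g (iota v) = f v) /\
    (forall g g' : A -> B, mf_hom g -> mf_hom g' ->
       (forall v, g (iota v) = g' (iota v)) -> forall x, g x = g' x).

Definition alg_hom (A B : algType K) (g : A -> B) : Prop :=
  [/\ is_linear g, forall x y, g (x * y) = g x * g y & g 1 = 1].

Definition is_tensor_alg (W : lmodType K) (T : algType K) (iota : W -> T)
  : Prop :=
  is_linear iota /\
  forall (B : algType K) (f : W -> B), is_linear f ->
    (exists g : T -> B, alg_hom g /\ forall w, g (iota w) = f w) /\
    (forall g g' : T -> B, alg_hom g -> alg_hom g' ->
       (forall w, g (iota w) = g' (iota w)) -> forall x, g x = g' x).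

End Defs.

(* On words of T(MagFine(V)) put the product: 1 is a unit, a one-letter word
   times w is the concatenation, and a word of length p >= 2 times a nonempty
   word w' is the one-letter word m^N_(p-1)(w w'), N the total length.  This
   makes T(MagFine(V)) the free unital magmatic algebra on V: a magmatic
   algebra B is a MagFine-algebra through
     m^N_i(b_1, ..., b_N) = (b_1 (... b_(i+1))) (b_(i+2) (... (b_N 1))),
   so a linear map V -> B extends to MagFine(V), then to words by right-nested
   products.  Free objects on V being unique up to a unique isomorphism, the
   isomorphism Mag(V) -> T(MagFine(V)) is natural in V.
   The tensor algebra is only known through its universal property, so maps
   out of it are built by letting it act on multilinear functionals of words,
   a letter acting by appending itself to the argument. *)

From HB Require Import structures.
From mathcomp Require Import all_boot all_order all_algebra.
From mathcomp Require Import boolp functions.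
Set Implicit Arguments. Unset Strict Implicit. Unset Printing Implicit Defensive.
Import GRing.Theory.
Local Open Scope ring_scope.

Section IsLinear.
Variables (K : fieldType) (U V W : lmodType K) (f : U -> V).
Hypothesis f_lin : is_linear f.

Lemma is_linearD x y : f (x + y) = f x + f y.
Proof. exact: (GRing.semilinear_linear f_lin).2. Qed.

Lemma is_linearZ a x : f (a *: x) = a *: f x.
Proof. exact: (GRing.semilinear_linear f_lin).1. Qed.

Lemma is_linear0 : f 0 = 0.
Proof. by rewrite -(scale0r (0 : U)) is_linearZ scale0r. Qed.

Lemma is_linear_comp (g : V -> W) : is_linear g -> is_linear (g \o f).
Proof. by move=> g_lin a x y /=; rewrite f_lin g_lin. Qed.

End IsLinear.

Lemma alg_hom_id (K : fieldType) (A : algType K) : alg_hom (@idfun A).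
Proof. by []. Qed.

Lemma alg_hom_comp (K : fieldType) (A B C : algType K) (f : A -> B) (g : B -> C) :
  alg_hom f -> alg_hom g -> alg_hom (g \o f).
Proof.
case=> f_lin fM f1 [g_lin gM g1]; split=> [||/=]; last by rewrite f1 g1.
  exact: is_linear_comp.
by move=> x y /=; rewrite fM gM.
Qed.

Lemma mag_hom_id (K : fieldType) (A : magAlg K) : mag_hom (@idfun A).
Proof. by []. Qed.

Lemma mag_hom_comp (K : fieldType) (A B C : magAlg K) (f : A -> B) (g : B -> C) :
  mag_hom f -> mag_hom g -> mag_hom (g \o f).
Proof.
case=> f_lin fM f1 [g_lin gM g1]; split=> [||/=]; last by rewrite f1 g1.
  exact: is_linear_comp.
by move=> x y /=; rewrite fM gM.
Qed.

Section Endomorphisms.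
Variables (K : fieldType) (Z : lmodType K).
(* Endomorphisms of Z x K rather than of Z: the extra coordinate keeps the
   algebra nontrivial even when Z = 0, and [endo_pad] discards it. *)
Local Notation X := (Z * K^o)%type.

Definition linear_fun : {pred X -> X} := fun f => `[< is_linear f >].

Lemma linear_fun_submod_closed : submod_closed linear_fun.
Proof.
split=> [|a f g /asboolP f_lin /asboolP g_lin]; apply/asboolP => b x y.
  by rewrite scaler0 addr0.
have -> z : (a *: f + g) z = a *: f z + g z by [].
rewrite f_lin g_lin !scalerDr !scalerA mulrC addrACA; reflexivity.
Qed.

HB.instance Definition _ :=
  GRing.isSubmodClosed.Build K _ linear_fun linear_fun_submod_closed.

Record endo := Endo { endo_fun :> X -> X; endo_funP : linear_fun endo_fun }.
HB.instance Definition _ := [isSub for endo_fun].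
HB.instance Definition _ := [Choice of endo by <:].
HB.instance Definition _ := [SubChoice_isSubLmodule of endo by <:].

Lemma endo_linear (f : endo) : is_linear f.
Proof. exact/asboolP/endo_funP. Qed.

Lemma comp_linear_fun (f g : endo) : linear_fun (f \o g).
Proof. exact/asboolP/is_linear_comp/endo_linear/endo_linear. Qed.

Definition endo_mul (f g : endo) : endo := Endo (comp_linear_fun f g).
Definition endo_one : endo := @Endo idfun (asboolT (fun _ _ _ => erefl)).

Lemma endo_mulA : associative endo_mul. Proof. by move=> f g h; apply: val_inj. Qed.
Lemma endo_mul1r : left_id endo_one endo_mul. Proof. by move=> f; apply: val_inj. Qed.
Lemma endo_mulr1 : right_id endo_one endo_mul. Proof. by move=> f; apply: val_inj. Qed.
Lemma endo_mulDl : left_distributive endo_mul +%R.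
Proof. by move=> f g h; apply: val_inj. Qed.
Lemma endo_mulDr : right_distributive endo_mul +%R.
Proof.
by move=> f g h; apply/val_inj/funext => x /=; rewrite (is_linearD (endo_linear f)).
Qed.

Lemma endo_one_neq0 : endo_one != 0.
Proof.
by apply/eqP => /(congr1 (fun f : endo => (f (0, 1)).2)) /eqP; rewrite oner_eq0.
Qed.

HB.instance Definition _ := GRing.Zmodule_isNzRing.Build endo
  endo_mulA endo_mul1r endo_mulr1 endo_mulDl endo_mulDr endo_one_neq0.

Lemma endo_scalerAl (a : K) (f g : endo) : a *: (f * g) = (a *: f) * g.
Proof. exact: val_inj. Qed.
HB.instance Definition _ := GRing.Lmodule_isLalgebra.Build K endo endo_scalerAl.

Lemma endo_scalerAr (a : K) (f g : endo) : a *: (f * g) = f * (a *: g).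
Proof. by apply/val_inj/funext => x /=; rewrite (is_linearZ (endo_linear f)). Qed.
HB.instance Definition _ := GRing.Lalgebra_isAlgebra.Build K endo endo_scalerAr.

Lemma endo_mulE (f g : endo) x : (f * g) x = f (g x). Proof. by []. Qed.

Lemma pair0_linear : is_linear (fun z : Z => (z, 0) : X).
Proof. by move=> a x y; apply: injective_projections => //=; rewrite scaler0 addr0. Qed.

Lemma pad_linear_fun (f : Z -> Z) : is_linear f -> linear_fun (fun p : X => (f p.1, 0)).
Proof.
move=> f_lin; apply/asboolP => a x y; congr pair; first exact: f_lin.
by rewrite /= scaler0 addr0.
Qed.

Definition endo_pad (f : Z -> Z) (f_lin : is_linear f) : endo :=
  Endo (pad_linear_fun f_lin).

End Endomorphisms.

Section MultilinearFunctionals.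
Variables (K : fieldType) (M Y : lmodType K).

(* The [nat] argument is a marker recording where the first factor of a
   product of words ends. *)
Definition list_multilinear (G : nat * seq M -> Y) : Prop :=
  forall q pre suf (a : K) u w,
    G (q, pre ++ (a *: u + w) :: suf)
    = a *: G (q, pre ++ u :: suf) + G (q, pre ++ w :: suf).

Definition mlfun_pred : {pred nat * seq M -> Y} :=
  fun G => `[< list_multilinear G >].

Lemma mlfun_pred_submod_closed : submod_closed mlfun_pred.
Proof.
split=> [|a F G /asboolP F_ml /asboolP G_ml]; apply/asboolP => q pre suf b u w.
  by rewrite scaler0 addr0.
have -> p : (a *: F + G) p = a *: F p + G p by [].
rewrite F_ml G_ml !scalerDr !scalerA mulrC addrACA; reflexivity.
Qed.

HB.instance Definition _ :=
  GRing.isSubmodClosed.Build K _ mlfun_pred mlfun_pred_submod_closed.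

Record mlfun :=
  MLFun { mlfun_val :> nat * seq M -> Y; mlfun_valP : mlfun_pred mlfun_val }.
HB.instance Definition _ := [isSub for mlfun_val].
HB.instance Definition _ := [Choice of mlfun by <:].
HB.instance Definition _ := [SubChoice_isSubLmodule of mlfun by <:].

Lemma mlfun_multilinear (G : mlfun) : list_multilinear G.
Proof. exact/asboolP/mlfun_valP. Qed.

Lemma mlfunP (G : nat * seq M -> Y) : list_multilinear G -> mlfun_pred G.
Proof. by move/asboolP. Qed.

Lemma mark_multilinear (G : mlfun) : list_multilinear (fun p => G (size p.2, p.2)).
Proof. by move=> q pre suf a u w /=; rewrite !size_cat mlfun_multilinear. Qed.

Definition mark (G : mlfun) : mlfun := MLFun (mlfunP (mark_multilinear G)).

Lemma mark_linear : is_linear mark.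
Proof. by move=> a F G; apply: val_inj. Qed.

End MultilinearFunctionals.

Section TensorWords.
Variables (K : fieldType) (M : lmodType K) (T : algType K) (iT : M -> T).
Hypothesis HT : is_tensor_alg iT.

Lemma tensor_lift (B : algType K) (f : M -> B) : is_linear f ->
  {g : T -> B | alg_hom g /\ forall w, g (iT w) = f w}.
Proof. by move=> f_lin; apply: cid; case: HT => _ /(_ B f f_lin) []. Qed.

Lemma tensor_hom_unique (B : algType K) (g g' : T -> B) :
  alg_hom g -> alg_hom g' -> (forall w, g (iT w) = g' (iT w)) -> g =1 g'.
Proof.
move=> g_hom; have [g_lin _ _] := g_hom; case: HT => iT_lin.
by move=> /(_ B _ (is_linear_comp iT_lin g_lin)) [_ uniq]; apply: uniq.
Qed.

Definition word (l : seq M) : T := \prod_(a <- l) iT a.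

Lemma word_nil : word [::] = 1.
Proof. exact: big_nil. Qed.

Lemma word_cons a l : word (a :: l) = iT a * word l.
Proof. exact: big_cons. Qed.

Lemma word_cat l l' : word (l ++ l') = word l * word l'.
Proof. exact: big_cat. Qed.

Definition in_word_span (x : T) : Prop :=
  forall Q : T -> Prop, (forall a y z, Q y -> Q z -> Q (a *: y + z)) ->
    (forall l, Q (word l)) -> Q x.

Definition word_span : {pred T} := fun x => `[< in_word_span x >].

Lemma word_span_subalg_closed : subalg_closed word_span.
Proof.
split.
- by apply/asboolP => Q _ Qw; rewrite -word_nil.
- move=> a x y /asboolP Sx /asboolP Sy; apply/asboolP => Q Qlin Qw.
  by apply: (Qlin); [exact: Sx | exact: Sy].
move=> x y /asboolP Sx /asboolP Sy; apply/asboolP => Q Qlin Qw.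
apply: (Sx (fun z => Q (z * y))) => [a z z' Qz Qz' | l].
  by rewrite mulrDl -scalerAl; apply: Qlin.
apply: (Sy (fun z => Q (word l * z))) => [a z z' Qz Qz' | l'].
  by rewrite mulrDr -scalerAr; apply: Qlin.
by rewrite -word_cat.
Qed.

HB.instance Definition _ :=
  GRing.isSubalgClosed.Build K T word_span word_span_subalg_closed.

Record span_elt := SpanElt { span_val :> T; span_valP : word_span span_val }.
HB.instance Definition _ := [isSub for span_val].
HB.instance Definition _ := [Choice of span_elt by <:].
HB.instance Definition _ := [SubChoice_isSubAlgebra of span_elt by <:].

Lemma word_span_ind (Q : T -> Prop) :
  (forall a y z, Q y -> Q z -> Q (a *: y + z)) -> (forall l, Q (word l)) ->
  forall x, Q x.
Proof.
move=> Qlin Qw x; suff /asboolP : word_span x by apply.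
have iT_span w : word_span (iT w).
  by apply/asboolP => Q' _ Qw'; have := Qw' [:: w]; rewrite /word big_seq1.
have [iT_lin _] := HT.
have f_lin : is_linear (fun w => SpanElt (iT_span w)).
  by move=> a w w'; apply: val_inj; exact: iT_lin.
have [g [g_hom g_iT]] := tensor_lift f_lin.
have val_hom : alg_hom span_val by [].
have E := tensor_hom_unique (alg_hom_comp g_hom val_hom) (alg_hom_id T).
by rewrite -[x]/(idfun x) -E => [|w]; [exact: span_valP | rewrite /= g_iT].
Qed.
End TensorWords.

Section TensorAction.
Variables (K : fieldType) (M : lmodType K) (T : algType K) (iT : M -> T).
Hypothesis HT : is_tensor_alg iT.
Variable Y : lmodType K.
Local Notation F := (mlfun M Y).

Lemma append_letter_multilinear (a : M) (G : F) :
  list_multilinear (fun p => G (p.1, rcons p.2 a)).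
Proof.
by move=> q pre suf b u w /=; rewrite !rcons_cat !rcons_cons mlfun_multilinear.
Qed.

Definition append_letter (a : M) (G : F) : F :=
  MLFun (mlfunP (append_letter_multilinear a G)).

Lemma append_letter_linear a : is_linear (append_letter a).
Proof. by move=> b F G; apply: val_inj. Qed.

Lemma append_letter_endo_linear : is_linear (fun a => endo_pad (append_letter_linear a)).
Proof.
move=> b a a'; apply/val_inj/funext => -[G c].
congr pair; last by rewrite /= scaler0 addr0.
apply/val_inj/funext => -[q zs] /=.
by rewrite -cats1 mlfun_multilinear !cats1.
Qed.

Definition act_endo : T -> endo F := sval (tensor_lift HT append_letter_endo_linear).

Lemma act_endo_hom :
  alg_hom act_endo /\ forall w, act_endo (iT w) = endo_pad (append_letter_linear w).
Proof. exact: (svalP (tensor_lift HT append_letter_endo_linear)). Qed.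

Definition act (x : T) (G : F) : F := (act_endo x (G, 0)).1.

Lemma act_word l G q zs : act (word iT l) G (q, zs) = G (q, zs ++ l).
Proof.
have [[_ gM g1] g_iT] := act_endo_hom.
elim: l zs => [|a l IH] zs; first by rewrite /act word_nil g1 cats0.
by rewrite /act word_cons gM endo_mulE g_iT /= IH cat_rcons.
Qed.

Lemma act_linear G : is_linear (act^~ G).
Proof. by have [[g_lin _ _] _] := act_endo_hom; move=> a x y; rewrite /act g_lin. Qed.

Lemma act_linear_fun x : is_linear (act x).
Proof. by move=> a G H; rewrite /act pair0_linear endo_linear. Qed.

End TensorAction.

Section MagFineListOperations.
Variables (K : fieldType) (A : magFineAlg K).

(* [mf_op_seq zs q] is m^N_(q-1) applied to the letters of [zs], where
   N = size zs; it is meaningful for 1 < q < N. *)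
Definition mf_op_seq (zs : seq A) (q : nat) : A :=
  @mf_op _ A (size zs - 3) (inord (q - 2)) (fun k => nth 0 zs k).

Lemma mf_op_seq_multilinear q pre suf (a : K) (u w : A) :
  (3 <= size pre + (size suf).+1)%N ->
  mf_op_seq (pre ++ (a *: u + w) :: suf) q
  = a *: mf_op_seq (pre ++ u :: suf) q + mf_op_seq (pre ++ w :: suf) q.
Proof.
move=> size_ge3; rewrite /mf_op_seq !size_cat /=; set n := (_ - 3)%N.
have pre_lt : (size pre < n.+3)%N by rewrite /n -addn3 subnK // addnS ltnS leq_addr.
have E v : (fun k : 'I_n.+3 => nth 0 (pre ++ v :: suf) k)
         = (fun k => if k == Ordinal pre_lt then v else nth 0 (pre ++ 0 :: suf) k).
  apply: funext => k.
  transitivity (nth 0 (set_nth 0 (pre ++ 0 :: suf) (size pre) v) k).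
    by congr nth; elim: (pre) => //= b pre' ->.
  exact: nth_set_nth.
by rewrite !E mf_op_multilinear.
Qed.

Lemma mf_op_seq_enum n (j : 'I_n.+1) (xs : 'I_n.+3 -> A) :
  mf_op_seq [seq xs k | k <- enum 'I_n.+3] j.+2 = mf_op j xs.
Proof.
rewrite /mf_op_seq size_map size_enum_ord !subSS !subn0.
have -> : inord j = j by apply/val_inj/inordK.
by congr mf_op; apply: funext => k; rewrite (nth_map k) ?size_enum_ord // nth_ord_enum.
Qed.

End MagFineListOperations.

Lemma mf_hom_op_seq (K : fieldType) (A B : magFineAlg K) (h : A -> B) zs q :
  mf_hom h -> h (mf_op_seq zs q) = mf_op_seq (map h zs) q.
Proof.
case=> h_lin h_op; rewrite /mf_op_seq h_op size_map; congr mf_op; apply: funext => k.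
case: (ltnP k (size zs)) => [k_lt | k_ge]; first by rewrite (nth_map 0).
by rewrite !nth_default ?size_map // (is_linear0 h_lin).
Qed.

Section TensorMagmatic.
Variables (K : fieldType) (M : magFineAlg K) (T : algType K) (iT : M -> T).
Hypothesis HT : is_tensor_alg iT.
Local Notation word := (word iT).

Let iT_linear : is_linear iT := proj1 HT.

Lemma word_multilinear pre suf (a : K) u w :
  word (pre ++ (a *: u + w) :: suf)
  = a *: word (pre ++ u :: suf) + word (pre ++ w :: suf).
Proof.
by rewrite !word_cat !word_cons iT_linear mulrDl mulrDr -scalerAl -scalerAr.
Qed.

(* The magmatic product of the word formed by the first [q] letters of [zs]
   with the word formed by the remaining ones. *)
Definition prod_word (q : nat) (zs : seq M) : T :=
  if (1 < q < size zs)%N then iT (mf_op_seq zs q) else word zs.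

Lemma prod_word_multilinear : list_multilinear (fun p => prod_word p.1 p.2).
Proof.
move=> q pre suf a u w; rewrite /prod_word /= !size_cat /=.
case: ifP => [/andP [q_gt1 q_lt] | _]; last exact: word_multilinear.
by rewrite mf_op_seq_multilinear ?iT_linear // (leq_ltn_trans q_gt1 q_lt).
Qed.

Definition prod_fun : mlfun M T := MLFun (mlfunP prod_word_multilinear).

Definition tmul (x y : T) : T := act HT x (mark (act HT y prod_fun)) (0, [::]).

Lemma tmul_word l l' : tmul (word l) (word l') = prod_word (size l) (l ++ l').
Proof. by rewrite /tmul act_word /= act_word. Qed.

Lemma tmulDl a x y z : tmul (a *: x + y) z = a *: tmul x z + tmul y z.
Proof. by rewrite /tmul act_linear. Qed.

Lemma tmulDr a x y z : tmul z (a *: x + y) = a *: tmul z x + tmul z y.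
Proof. by rewrite /tmul act_linear mark_linear act_linear_fun. Qed.

Lemma tmul1l x : tmul 1 x = x.
Proof.
elim/(word_span_ind HT): x => [a x y IHx IHy | l]; first by rewrite tmulDr IHx IHy.
by rewrite -(word_nil iT) tmul_word.
Qed.

Lemma tmul1r x : tmul x 1 = x.
Proof.
elim/(word_span_ind HT): x => [a x y IHx IHy | l]; first by rewrite tmulDl IHx IHy.
by rewrite -(word_nil iT) tmul_word /prod_word cats0 ltnn andbF.
Qed.

Lemma word_cons_tmul a l : word (a :: l) = tmul (iT a) (word l).
Proof. by rewrite -[iT a]mulr1 -(word_nil iT) -word_cons tmul_word. Qed.

Lemma iT_mf_op_seq zs q : (1 < q < size zs)%N ->
  iT (mf_op_seq zs q) = tmul (word (take q zs)) (word (drop q zs)).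
Proof.
case/andP => q_gt1 q_lt.
by rewrite tmul_word cat_take_drop size_take q_lt /prod_word q_gt1 q_lt.
Qed.

Definition tensor_mag : magAlg K := MagAlg tmulDl tmulDr tmul1l tmul1r.

End TensorMagmatic.

Lemma map_upd_notin (I : eqType) (R : Type) (s : seq I) (x : I -> R) i v :
  i \notin s -> [seq if k == i then v else x k | k <- s] = [seq x k | k <- s].
Proof.
move=> i_notin; apply/eq_in_map => k k_in.
by case: eqP => // k_eq; rewrite -k_eq k_in in i_notin.
Qed.

Section MagFineOfMag.
Variables (K : fieldType) (B : magAlg K).

Definition rprod (l : seq B) : B := foldr (@mag_mul K B) (mag_one B) l.

Lemma rprod_multilinear pre suf (a : K) u w :
  rprod (pre ++ (a *: u + w) :: suf)
  = a *: rprod (pre ++ u :: suf) + rprod (pre ++ w :: suf).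
Proof. by elim: pre => [|b pre IH] /=; rewrite ?mag_mulDl // IH mag_mulDr. Qed.

Lemma rprod_upd (I : eqType) (s : seq I) (x : I -> B) (i : I) (a : K) (u w : B) :
  uniq s -> i \in s ->
  rprod [seq if k == i then a *: u + w else x k | k <- s]
  = a *: rprod [seq if k == i then u else x k | k <- s]
    + rprod [seq if k == i then w else x k | k <- s].
Proof.
elim: s => //= k s IH /andP [k_notin s_uniq]; rewrite inE.
have [<- _ | k_neq_i /= i_in] := eqVneq k i; last by rewrite IH // mag_mulDr.
by rewrite !map_upd_notin // mag_mulDl.
Qed.

Definition mag_fine_op n (j : 'I_n.+1) (x : 'I_n.+3 -> B) : B :=
  mag_mul (rprod [seq x k | k <- take j.+2 (enum 'I_n.+3)])
          (rprod [seq x k | k <- drop j.+2 (enum 'I_n.+3)]).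

Lemma mag_fine_op_multilinear n (j : 'I_n.+1) : multilinear (@mag_fine_op n j).
Proof.
move=> i x a u w; rewrite /mag_fine_op.
set s1 := take _ _; set s2 := drop _ _.
have : uniq (s1 ++ s2) by rewrite cat_take_drop enum_uniq.
rewrite cat_uniq => /and3P [s1_uniq /hasPn disj s2_uniq].
have : i \in s1 ++ s2 by rewrite cat_take_drop mem_enum.
rewrite mem_cat => /orP [i_in1 | i_in2].
  have i_notin2 : i \notin s2 by apply/negP => /disj; rewrite i_in1.
  by rewrite !(map_upd_notin _ _ i_notin2) rprod_upd // mag_mulDl.
by rewrite !(map_upd_notin _ _ (disj i i_in2)) rprod_upd // mag_mulDr.
Qed.

Definition magFine_of_mag : magFineAlg K := MagFineAlg mag_fine_op_multilinear.

Lemma mf_op_seq_mag zs q : (1 < q < size zs)%N ->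
  mf_op_seq (A := magFine_of_mag) zs q = mag_mul (rprod (take q zs)) (rprod (drop q zs)).
Proof.
case/andP => q_gt1 q_lt; rewrite /mf_op_seq /= /mag_fine_op !map_take !map_drop.
have size3 : (size zs - 3).+3 = size zs.
  by rewrite -addn3 subnK // (leq_ltn_trans q_gt1 q_lt).
rewrite inordK; last by rewrite ltn_subLR // add2n size3.
have -> : (q - 2).+2 = q by rewrite -addn2 subnK.
by rewrite (map_comp (nth 0 zs) val) val_enum_ord size3 -/(mkseq _ _) mkseq_nth.
Qed.

End MagFineOfMag.

Section MagFineHomExtension.
Variables (K : fieldType) (M : magFineAlg K) (T : algType K) (iT : M -> T).
Hypothesis HT : is_tensor_alg iT.
Variables (B : magAlg K) (g : M -> magFine_of_mag B).
Hypothesis g_hom : mf_hom g.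
Local Notation TM := (tensor_mag HT).
Local Notation word := (word iT).

Lemma rprod_map_multilinear : list_multilinear (fun p => rprod (map g p.2)).
Proof.
have [g_lin _] := g_hom.
by move=> q pre suf a u w /=; rewrite !map_cat /= g_lin rprod_multilinear.
Qed.

Definition mf_hom_ext (x : T) : B :=
  act HT x (MLFun (mlfunP rprod_map_multilinear)) (0, [::]).

Lemma mf_hom_ext_word l : mf_hom_ext (word l) = rprod (map g l).
Proof. by rewrite /mf_hom_ext act_word. Qed.

Lemma mf_hom_ext_iT w : mf_hom_ext (iT w) = g w.
Proof.
by rewrite -[iT w]mulr1 -(word_nil iT) -word_cons mf_hom_ext_word /= mag_mul1r.
Qed.

Lemma mf_hom_ext_prod_word l l' :
  mf_hom_ext (prod_word iT (size l) (l ++ l'))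
  = mag_mul (mf_hom_ext (word l)) (mf_hom_ext (word l')).
Proof.
rewrite !mf_hom_ext_word /prod_word size_cat; case: ifP => [l_size | l_small].
  rewrite mf_hom_ext_iT (mf_hom_op_seq _ _ g_hom) mf_op_seq_mag ?size_map ?size_cat //.
  by rewrite map_cat take_size_cat ?drop_size_cat ?size_map.
rewrite mf_hom_ext_word map_cat.
case: l l_small => [|a [|b l]] /= l_small; rewrite ?mag_mul1l ?mag_mul1r //.
by case: l' l_small => [|c l'] /=; rewrite ?cats0 ?mag_mul1r // addnS ltnS leq_addr.
Qed.

Lemma mf_hom_ext_hom : mag_hom (A := TM) mf_hom_ext.
Proof.
have ext_lin : is_linear mf_hom_ext by move=> a x y; rewrite /mf_hom_ext act_linear.
split=> //; last by rewrite /= -(word_nil iT) mf_hom_ext_word.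
elim/(word_span_ind HT) => [a x x' IHx IHx' y | l].
  by rewrite mag_mulDl !ext_lin IHx IHx' mag_mulDl.
elim/(word_span_ind HT) => [a y y' IHy IHy' | l'].
  by rewrite mag_mulDr !ext_lin IHy IHy' mag_mulDr.
by rewrite /= tmul_word mf_hom_ext_prod_word.
Qed.

End MagFineHomExtension.

Section TensorMagFree.
Variables (K : fieldType) (V : lmodType K) (M : magFineAlg K) (iF : V -> M).
Hypothesis HF : is_free_magfine iF.
Variables (T : algType K) (iT : M -> T).
Hypothesis HT : is_tensor_alg iT.
Local Notation TM := (tensor_mag HT).
Local Notation word := (word iT).

Lemma mag_hom_word (B : magAlg K) (h : TM -> B) :
  mag_hom h -> forall l, h (word l) = rprod (map (h \o iT) l).
Proof.
case=> _ hM h1; elim=> [|a l IH]; first by rewrite word_nil; exact: h1.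
by rewrite word_cons_tmul hM IH.
Qed.

Lemma mag_hom_mf_hom (B : magAlg K) (h : TM -> B) :
  mag_hom h -> mf_hom (B := magFine_of_mag B) (h \o iT).
Proof.
move=> h_hom; have [h_lin hM _] := h_hom.
split=> [a x y /= | n j xs /=]; first by rewrite (proj1 HT) h_lin.
rewrite -mf_op_seq_enum iT_mf_op_seq; last first.
  by rewrite size_map -cardE card_ord; exact: ltn_ord j.
by rewrite /= /mag_fine_op hM !mag_hom_word // !map_take !map_drop -!map_comp.
Qed.

Lemma tensor_mag_hom_unique (B : magAlg K) (h h' : TM -> B) :
  mag_hom h -> mag_hom h' -> (forall v, h (iT (iF v)) = h' (iT (iF v))) -> h =1 h'.
Proof.
move=> h_hom h'_hom E.
have [hiT_hom h'iT_hom] := (mag_hom_mf_hom h_hom, mag_hom_mf_hom h'_hom).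
have [iF_lin /(_ _ _ (is_linear_comp iF_lin hiT_hom.1)) [_ uniq]] := HF.
have E' := uniq _ _ hiT_hom h'iT_hom E.
have [[h_lin _ _] [h'_lin _ _]] := (h_hom, h'_hom).
elim/(word_span_ind HT) => [a x y IHx IHy | l]; first by rewrite h_lin h'_lin IHx IHy.
by rewrite !mag_hom_word //; congr rprod; apply: eq_map.
Qed.

Lemma tensor_mag_lift (B : magAlg K) (f : V -> B) :
  is_linear f -> exists g : TM -> B, mag_hom g /\ forall v, g (iT (iF v)) = f v.
Proof.
move=> f_lin; have [_ /(_ (magFine_of_mag B) f f_lin) [[g [g_hom g_iF]] _]] := HF.
exists (mf_hom_ext HT g_hom); split; first exact: mf_hom_ext_hom.
by move=> v; rewrite mf_hom_ext_iT.
Qed.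

Lemma tensor_mag_free : is_free_mag (A := TM) (iT \o iF).
Proof.
split=> [a x y /=|B f f_lin]; first by rewrite (proj1 HF) (proj1 HT).
split; first exact: tensor_mag_lift.
exact: tensor_mag_hom_unique.
Qed.

End TensorMagFree.

Section TensorMagNatural.
Variables (K : fieldType) (M M' : magFineAlg K) (T T' : algType K).
Variables (iT : M -> T) (iT' : M' -> T').
Hypotheses (HT : is_tensor_alg iT) (HT' : is_tensor_alg iT').
Variables (h : M -> M') (k : T -> T').
Hypotheses (h_hom : mf_hom h) (k_hom : alg_hom k).
Hypothesis k_iT : forall w, k (iT w) = iT' (h w).

Lemma alg_hom_word l : k (word iT l) = word iT' (map h l).
Proof.
have [_ kM k1] := k_hom.
by elim: l => [|a l IH]; rewrite ?word_nil // !word_cons kM k_iT IH.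
Qed.

Lemma alg_hom_prod_word q zs : k (prod_word iT q zs) = prod_word iT' q (map h zs).
Proof.
rewrite /prod_word size_map; case: ifP => _; last exact: alg_hom_word.
by rewrite k_iT (mf_hom_op_seq _ _ h_hom).
Qed.

Lemma alg_hom_tensor_mag : mag_hom (A := tensor_mag HT) (B := tensor_mag HT') k.
Proof.
have [k_lin _ k1] := k_hom; split=> //.
elim/(word_span_ind HT) => [a x x' IHx IHx' y | l].
  by rewrite mag_mulDl !k_lin IHx IHx' mag_mulDl.
elim/(word_span_ind HT) => [a y y' IHy IHy' | l'].
  by rewrite mag_mulDr !k_lin IHy IHy' mag_mulDr.
by rewrite /= tmul_word alg_hom_prod_word !alg_hom_word tmul_word map_cat size_map.
Qed.

End TensorMagNatural.

Section FreeMag.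
Variables (K : fieldType) (V : lmodType K) (A : magAlg K) (iA : V -> A).
Hypothesis HA : is_free_mag iA.

Lemma free_mag_lift (B : magAlg K) (f : V -> B) : is_linear f ->
  {g : A -> B | mag_hom g /\ forall v, g (iA v) = f v}.
Proof. by move=> f_lin; apply: cid; case: HA => _ /(_ B f f_lin) []. Qed.

Lemma free_mag_hom_unique (B : magAlg K) (g g' : A -> B) :
  mag_hom g -> mag_hom g' -> (forall v, g (iA v) = g' (iA v)) -> g =1 g'.
Proof.
move=> g_hom; have [g_lin _ _] := g_hom; case: HA => iA_lin.
by move=> /(_ B _ (is_linear_comp iA_lin g_lin)) [_ uniq]; apply: uniq.
Qed.

End FreeMag.

Lemma free_mag_bij (K : fieldType) (V : lmodType K) (A B : magAlg K)
    (iA : V -> A) (iB : V -> B) (g : A -> B) :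
  is_free_mag iA -> is_free_mag iB -> mag_hom g -> (forall v, g (iA v) = iB v) ->
  bijective g.
Proof.
move=> HA HB g_hom g_iA; have [g' [g'_hom g'_iB]] := free_mag_lift HB (proj1 HA).
exists g' => x.
  apply: (free_mag_hom_unique HA (mag_hom_comp g_hom g'_hom) (mag_hom_id A)).
  by move=> v /=; rewrite g_iA g'_iB.
apply: (free_mag_hom_unique HB (mag_hom_comp g'_hom g_hom) (mag_hom_id B)).
by move=> v /=; rewrite g'_iB g_iA.
Qed.

Theorem corollary3p5 (K : fieldType)
  (Mag : forall V : lmodType K, magAlg K)
  (iM : forall V : lmodType K, V -> Mag V)
  (HM : forall V : lmodType K, is_free_mag (iM V))
  (MF : forall V : lmodType K, magFineAlg K)
  (iF : forall V : lmodType K, V -> MF V)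
  (HF : forall V : lmodType K, is_free_magfine (iF V))
  (TA : forall W : lmodType K, algType K)
  (iT : forall W : lmodType K, W -> TA W)
  (HT : forall W : lmodType K, is_tensor_alg (iT W)) :
  exists phi : forall V : lmodType K, Mag V -> TA (MF V),
    (forall V : lmodType K, is_linear (phi V) /\ bijective (phi V)) /\
    (forall (V V' : lmodType K) (f : V -> V'), is_linear f ->
     forall (g : Mag V -> Mag V') (h : MF V -> MF V')
            (k : TA (MF V) -> TA (MF V')),
       mag_hom g -> (forall v, g (iM V v) = iM V' (f v)) ->
       mf_hom h -> (forall v, h (iF V v) = iF V' (f v)) ->
       alg_hom k -> (forall w, k (iT (MF V) w) = iT (MF V') (h w)) ->
       forall x, phi V' (g x) = k (phi V x)).
Proof.
pose TM_free V := tensor_mag_free (HF V) (HT (MF V)).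
pose phi V := free_mag_lift (HM V) (proj1 (TM_free V)).
exists (fun V => sval (phi V)); split.
  move=> V; have [phi_hom phi_iM] := svalP (phi V); split; first by case: phi_hom.
  exact: free_mag_bij (HM V) (TM_free V) phi_hom phi_iM.
move=> V V' f f_lin g h k g_hom g_iM h_hom h_iF k_hom k_iT.
have [[phi_hom phi_iM] [phi'_hom phi'_iM]] := (svalP (phi V), svalP (phi V')).
apply: (free_mag_hom_unique (HM V) (mag_hom_comp g_hom phi'_hom)
          (mag_hom_comp phi_hom (alg_hom_tensor_mag _ _ h_hom k_hom k_iT))) => v /=.
by rewrite g_iM phi'_iM phi_iM /= k_iT h_iF.
Qed.
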